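(* Let $\mathcal{A}=\{A_i\}_{i=0}^p$ be a set of $n\times n$ matrices, and let $\mathcal{B}=\{B_i\}_{i=0}^q$ be a set of $n\times n$ matrices with $\operatorname{span}\{B_0,\dots,B_q\}=\operatorname{span}\{A_0,\dots,A_p\}$. Let $P_{\mathcal{B}}(\lambda)=\sum_{i=0}^q\lambda^iB_i$. If $P_{\mathcal{B}}(\lambda)$ has $n$ eigenpairs $(\lambda_j,x_j)$, $j=1,\dots,n$, such that $X=[x_1,\dots,x_n]$ is nonsingular and the geometric multiplicities of $\lambda_1,\dots,\lambda_n$ all equal one, then all solutions to the GJBD problem of $\mathcal{A}$ are equivalent.
   Context: $\operatorname{span}\{A_0,\dots,A_p\}=\{\sum_i\alpha_iA_i:\alpha_i\in\mathbb{C}\}$. A partition of $n$ is a tuple $\tau_n=(n_1,\dots,n_t)$ of positive integers with sum $n$; $\operatorname{card}(\tau_n)=t$. For an $n\times n$ matrix $A$ partitioned into blocks $A_{jk}$ of size $n_j\times n_k$, $A$ is $\tau_n$-block diagonal if $A_{jk}=0$ for $j\ne k$; $\mathbb{D}_{\tau_n}$ is the set of such matrices. The matrices lie in one of $\{$real symmetric, complex Hermitian, $\mathbb{R}^{n\times n}$, $\mathbb{C}^{n\times n}\}$ and diagonalizers are sought in a class $\mathbb{W}_n\in\{$real orthogonal, unitary, real nonsingular, complex nonsingular$\}$; $(\cdot)^\star$ is transpose (real) or conjugate transpose (complex). The JBD problem of a matrix set for a partition $\tau_n$: find $W\in\mathbb{W}_n$ with $W^\star A_iW\in\mathbb{D}_{\tau_n}$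 for all $i$. A solution of the GJBD problem is a pair $(\tau_n,W)$ with $W$ solving the JBD problem for $\tau_n$ and $\operatorname{card}(\tau_n)$ maximal among partitions for which the JBD problem is solvable. For a $t\times t$ permutation matrix $\Pi_t$, $\tau_n\Pi_t$ denotes the correspondingly permuted partition (viewing $\tau_n$ as a row vector), and the block permutation matrix corresponding with $\Pi_t$ is the $n\times n$ matrix obtained by replacing, in the $i$th row of $\Pi_t$, the entry $1$ by a permutation matrix of order $n_i$ and the entries $0$ by zero matrices of appropriate sizes. Two solutions $(\tau_n,W)$, $(\hat\tau_n,\widehat W)$ are equivalent if there exist a $t\times t$ permutation matrix $\Pi_t$ and a nonsingular $D\in\mathbb{D}_{\tau_n}$ such that $(\hat\tau_n,\widehat W)=(\tau_n\Pi_t,WD\Pi)$, where $\Pi$ is the block permutation matrix corresponding with $\Pi_t$. Eigenpairs $(\lambda,x)$ of $P(\lambda)$: $\det P(\lambda)=0$, $x\ne0$, $P(\lambda)x=0$; geometric multiplicity of $\lambda$ is $\dim\ker P(\lambda)$. *)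

(* Scalars: an arbitrary numClosedFieldType C (e.g. the
   complex numbers); "real" means [\is Num.real]. *)
From HB Require Import structures.
From mathcomp Require Import all_boot all_order all_fingroup all_algebra.
Set Implicit Arguments. Unset Strict Implicit. Unset Printing Implicit Defensive.
Import Order.TTheory GRing.Theory Num.Theory.
Local Open Scope ring_scope.

(* The four settings: (matrix class, diagonalizer class) pairs. *)
Inductive setting :=
  | RealSymOrth
  | HermUnitary
  | RealNonsing
  | CplxNonsing.

Section Defs.
Variable C : numClosedFieldType.

Definition real_mx n m (A : 'M[C]_(n, m)) : Prop :=
  forall i j, A i j \is Num.real.

Definition ctrmx n m (A : 'M[C]_(n, m)) : 'M[C]_(m, n) := (map_mx Num.conj A)^T.

Definition mxstar (st : setting) n (A : 'M[C]_n) : 'M[C]_n :=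
  match st with
  | RealSymOrth | RealNonsing => A^T
  | HermUnitary | CplxNonsing => ctrmx A
  end.

Definition mat_class (st : setting) n (A : 'M[C]_n) : Prop :=
  match st with
  | RealSymOrth => real_mx A /\ A^T = A
  | HermUnitary => ctrmx A = A
  | RealNonsing => real_mx A
  | CplxNonsing => True
  end.

Definition W_class (st : setting) n (W : 'M[C]_n) : Prop :=
  match st with
  | RealSymOrth => real_mx W /\ W^T *m W = 1%:M
  | HermUnitary => ctrmx W *m W = 1%:M
  | RealNonsing => real_mx W /\ W \in unitmx
  | CplxNonsing => W \in unitmx
  end.

Definition in_span n p (A : 'I_p -> 'M[C]_n) (M : 'M[C]_n) : Prop :=
  exists a : 'I_p -> C, M = \sum_(i < p) a i *: A i.

Definition mxpoly_eval n q (B : 'I_q -> 'M[C]_n) (l : C) : 'M[C]_n :=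
  \sum_(i < q) (l ^+ i) *: B i.

Definition eigenpair n q (B : 'I_q -> 'M[C]_n) (l : C) (x : 'cV[C]_n) : Prop :=
  \det (mxpoly_eval B l) = 0 /\ x != 0 /\ mxpoly_eval B l *m x = 0.

(* geometric multiplicity: dim ker P(l); the column space of cokermx M is
   exactly {x | M x = 0}. *)
Definition geom_mult n q (B : 'I_q -> 'M[C]_n) (l : C) : nat :=
  \rank (cokermx (mxpoly_eval B l)).

End Defs.

Definition is_partition (n : nat) (s : seq nat) : bool :=
  all (fun k => 0 < k)%N s && (sumn s == n).

(* index (0-based) of the block containing row/column i (0-based):
   the number of partial sums n_1+..+n_k (k >= 1) that are <= i. *)
Definition blk (s : seq nat) (i : nat) : nat :=
  count (fun ps => ps <= i)%N (scanl addn 0%N s).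

Definition block_diag (C : numClosedFieldType) n (s : seq nat) (A : 'M[C]_n) : Prop :=
  forall i j : 'I_n, blk s i != blk s j -> A i j = 0.

Definition jbd_sol (C : numClosedFieldType) (st : setting) n p
  (A : 'I_p -> 'M[C]_n) (s : seq nat) (W : 'M[C]_n) : Prop :=
  W_class st W /\ forall i, block_diag s (mxstar st W *m A i *m W).

Definition gjbd_sol (C : numClosedFieldType) (st : setting) n p
  (A : 'I_p -> 'M[C]_n) (s : seq nat) (W : 'M[C]_n) : Prop :=
  is_partition n s /\ jbd_sol st A s W /\
  forall s', is_partition n s' -> (exists W', jbd_sol st A s' W') ->
    (size s' <= size s)%N.

(* tau Pi_t, where Pi_t is the permutation matrix whose i-th row has its 1 in
   column sigma(i): the k-th entry is tau_{sigma^-1(k)}. *)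
Definition perm_part (s : seq nat) (sg : 'S_(size s)) : seq nat :=
  [seq nth 0%N s (val ((sg^-1)%g k)) | k <- enum 'I_(size s)].

(* Equivalence of solutions: (s2, W2) = (s Pi_t, W D Pi) where D is a
   nonsingular s-block diagonal matrix and Pi = perm_mx pi is the block
   permutation matrix corresponding with Pi_t: the rows of the i-th block
   (w.r.t. s) have their 1 in the sigma(i)-th column block (w.r.t. s Pi_t),
   so that this block is a permutation matrix of order n_i. *)
Definition equiv_sol (C : numClosedFieldType) n
  (s1 : seq nat) (W1 : 'M[C]_n) (s2 : seq nat) (W2 : 'M[C]_n) : Prop :=
  exists sg : 'S_(size s1), exists D : 'M[C]_n, exists pi : 'S_n,
    [/\ D \in unitmx, block_diag s1 D,
        (forall (r : 'I_n) (k : 'I_(size s1)),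
            blk s1 r = val k -> blk (perm_part sg) (pi r) = val (sg k)),
        s2 = perm_part sg
      & W2 = W1 *m D *m perm_mx pi].

From HB Require Import structures.
From mathcomp Require Import all_boot all_order all_fingroup all_algebra.
From mathcomp Require Import zify.
Set Implicit Arguments. Unset Strict Implicit. Unset Printing Implicit Defensive.
Import GRing.Theory Num.Theory.
Local Open Scope ring_scope.

(* Let (s, W) solve the JBD problem. As P_B(λ) lies in span A, the matrix
   W^* P_B(λ_j) W is s-block diagonal, and its kernel, which contains W^-1 x_j, is
   one-dimensional; hence the nonzero entries of W^-1 x_j lie in a single block
   be(j), and since W^-1 X is invertible exactly n_k eigenvectors go to block k.
   For two GJBD solutions, partition the eigenvectors by the pair (be1 j, be2 j).
   Then X -- made real when W1, W2 are real, and orthonormalised inside each class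
   when they are orthogonal or unitary -- block diagonalizes the A_i along this
   finer partition. Maximality of card s1 and card s2 forces be1 and be2 to induce
   the same partition, i.e. to differ by a permutation of blocks, and W1^-1 W2 is
   then block diagonal up to this permutation. *)

(** * Partitions and labellings *)

Definition blk_ord n (s : seq nat) (i : 'I_n) : nat := blk s i.

Lemma scanl_addn_shift x y s :
  scanl addn (x + y)%N s = map (addn x) (scanl addn y s).
Proof. by elim: s x y => [//|a s IH] x y /=; rewrite -addnA IH. Qed.

Lemma blk_cons x s i :
  blk (x :: s) i = if (i < x)%N then 0%N else (blk s (i - x)).+1.
Proof.
rewrite /blk /= add0n -[x in scanl _ x]addn0 scanl_addn_shift count_map.
case: ltnP => hi.
  rewrite add0n -[RHS](count_pred0 (scanl addn 0 s)).
  by apply: eq_count => y /=; apply/negbTE; rewrite -ltnNge; lia.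
by rewrite add1n; congr (_.+1); apply: eq_count => y /=; apply/idP/idP; lia.
Qed.

Lemma count_blk s k :
  count (fun i => blk s i == k) (iota 0 (sumn s)) = nth 0%N s k.
Proof.
elim: s k => [|x s IH] k /=; first by case: k.
rewrite iotaD count_cat add0n.
have -> : iota x (sumn s) = map (addn x) (iota 0 (sumn s)) by rewrite -iotaDl addn0.
rewrite count_map.
have -> : count (fun i => blk (x :: s) i == k) (iota 0 x) = ((k == 0%N) * x)%N.
  rewrite (@eq_in_count _ _ (fun _ => k == 0%N)); last first.
    by move=> i; rewrite mem_iota add0n => /andP[_ hi]; rewrite blk_cons hi eq_sym.
  by case: (k == 0%N); rewrite ?count_predT ?size_iota ?mul1n ?count_pred0.
rewrite (@eq_count _ _ (fun i => (blk s i).+1 == k)); last first.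
  by move=> i /=; rewrite blk_cons ltnNge leq_addr /= addKn.
case: k => [|k]; first by rewrite count_pred0 mul1n addn0.
by rewrite mul0n add0n /= -IH; apply: eq_count => i /=.
Qed.

Definition fiber_sizes n (lab : 'I_n -> nat) (s : seq nat) :=
  forall k, #|[pred j | lab j == k]| = nth 0%N s k.

Lemma card_ord_pred n (P : pred nat) : #|[pred i : 'I_n | P i]| = count P (iota 0 n).
Proof.
rewrite -val_enum_ord count_map cardE /enum_mem size_filter count_filter.
by apply: eq_count => i; rewrite !inE andbT.
Qed.

Lemma blk_fiber_sizes n s : sumn s = n -> fiber_sizes (blk_ord s : 'I_n -> nat) s.
Proof. by move=> <- k; rewrite (card_ord_pred _ (fun i => blk s i == k)) count_blk. Qed.

Lemma fiber_sizes_lt n (lab : 'I_n -> nat) s j :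
  fiber_sizes lab s -> (lab j < size s)%N.
Proof.
move=> hs; rewrite ltnNge; apply/negP => hj.
have := hs (lab j); rewrite nth_default // => /card0_eq /(_ j).
by rewrite !inE eqxx.
Qed.

Lemma fiber_sizes_surj n (lab : 'I_n -> nat) s k :
  is_partition n s -> fiber_sizes lab s -> (k < size s)%N -> exists j, lab j = k.
Proof.
case/andP=> /allP pos _ hs hk.
have /card_gt0P [j] : (0 < #|[pred j | lab j == k]|)%N by rewrite hs pos ?mem_nth.
by rewrite inE => /eqP; exists j.
Qed.

Lemma size_undup_labels n (lab : 'I_n -> nat) s :
  is_partition n s -> fiber_sizes lab s ->
  size (undup [seq lab j | j <- enum 'I_n]) = size s.
Proof.
move=> hp hs; rewrite -(size_iota 0 (size s)); apply/eqP.
rewrite -uniq_size_uniq ?undup_uniq ?iota_uniq // => k.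
rewrite mem_undup mem_iota add0n; apply/idP/mapP => [hk|[j _ ->]].
  by have [j <-] := fiber_sizes_surj hp hs hk; exists j; rewrite ?mem_enum.
exact: fiber_sizes_lt.
Qed.

Lemma perm_of_fiber_cards n (T : eqType) (f g : 'I_n -> T) :
  (forall k, #|[pred i | f i == k]| = #|[pred i | g i == k]|) ->
  exists s : 'S_n, forall i, f i = g (s i).
Proof.
move=> h.
have : perm_eq [seq f i | i <- enum 'I_n] [tuple g i | i < n].
  rewrite /= -val_ord_tuple; apply/allP => x _.
  rewrite inE !count_map -!size_filter -!cardE; apply/eqP.
  by have := h x; rewrite /= /enum_mem.
case/tuple_permP => s hs; exists s => i.
have := congr1 (fun l => nth (f i) l i) hs.
rewrite (nth_map i) ?size_enum_ord // nth_ord_enum /= => ->.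
by rewrite -[nth _ _ _]/(nth (f i) (mktuple _) i) nth_mktuple tnth_mktuple.
Qed.

Lemma uniq_map_inj_in (T U : eqType) (f : T -> U) (s : seq T) :
  uniq (map f s) -> {in s &, injective f}.
Proof.
elim: s => [//|a s IH] /= /andP[fa_notin us] x y.
rewrite !inE => /orP[/eqP->|xs] /orP[/eqP->|ys] // e.
- by move: fa_notin; rewrite e map_f.
- by move: fa_notin; rewrite -e map_f.
- exact: IH.
Qed.

Lemma size_undup_map (T U : eqType) (f : T -> U) (s : seq T) :
  (size (undup (map f s)) <= size (undup s))%N.
Proof.
rewrite -(size_map f); apply: uniq_leq_size; first exact: undup_uniq.
by move=> x; rewrite mem_undup => /mapP[y ys ->]; rewrite map_f ?mem_undup.
Qed.

Lemma size_undup_map_inj (T U : eqType) (f : T -> U) (s : seq T) :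
  size (undup (map f s)) = size (undup s) -> {in s &, injective f}.
Proof.
move=> e x y xs ys; apply: (@uniq_map_inj_in _ _ f (undup s)); rewrite ?mem_undup //.
rewrite (@uniq_size_uniq _ (undup (map f s))) ?undup_uniq ?size_map ?e //.
move=> z; rewrite mem_undup; apply/mapP/mapP => -[w ws ->]; exists w => //.
  by rewrite mem_undup.
by rewrite -mem_undup.
Qed.

Lemma partition_of_labels n d (f : 'I_n -> nat) :
  (forall j, f j < d)%N -> (forall k, k < d -> exists j, f j = k)%N ->
  exists s, [/\ is_partition n s, size s = d &
                exists sg : 'S_n, forall i, blk_ord s i = f (sg i)].
Proof.
move=> f_lt f_onto; pose s := mkseq (fun k => #|[pred j | f j == k]|) d.
have fs : fiber_sizes f s.
  move=> k; case: (ltnP k d) => hk; first by rewrite nth_mkseq.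
  rewrite nth_default ?size_mkseq // eq_card0 // => j; rewrite !inE.
  by apply/negbTE; rewrite neq_ltn (leq_trans (f_lt j) hk).
have sum_s : sumn s = n.
  pose p j := Ordinal (f_lt j).
  rewrite sumnE big_map.
  have -> : (\sum_(k <- iota 0 d) #|[pred j | f j == k]| =
             \sum_(k < d) #|[pred j | f j == k]|)%N.
    by rewrite -[in LHS](subn0 d) big_mkord.
  rewrite -[RHS]card_ord -sum1_card [RHS](partition_big p xpredT) //=.
  apply: eq_bigr => k _; rewrite sum1_card; apply: eq_card => j.
  by rewrite !inE.
have part_s : is_partition n s.
  rewrite /is_partition sum_s eqxx andbT; apply/allP => _ /mapP[k + ->].
  rewrite mem_iota add0n => /andP[_ /f_onto[j fj]].
  by apply/card_gt0P; exists j; rewrite inE fj.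
exists s; split; rewrite ?size_mkseq //.
apply: perm_of_fiber_cards => k; rewrite fs; exact: blk_fiber_sizes.
Qed.

(** * Block patterns of matrices *)

Definition blockwise (R : nmodType) (T : eqType) m n
    (rl : 'I_m -> T) (cl : 'I_n -> T) (M : 'M[R]_(m, n)) :=
  forall i j, M i j != 0 -> rl i = cl j.

Definition fibermx {R : pzSemiRingType} (T : eqType) n (lab : 'I_n -> T) (k : T)
  : 'M[R]_n := diag_mx (\row_i (lab i == k)%:R).

Section BlockwiseLabels.
Variable R : nmodType.
Implicit Types T U : eqType.

Lemma blockwise_map T U m n (rl : 'I_m -> T) (cl : 'I_n -> T) (g : T -> U)
    (M : 'M[R]_(m, n)) :
  blockwise rl cl M -> blockwise (g \o rl) (g \o cl) M.
Proof. by move=> hM i j /hM /= ->. Qed.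

Lemma blockwise_pair T U m n (rl : 'I_m -> T) (cl : 'I_n -> T)
    (rl' : 'I_m -> U) (cl' : 'I_n -> U) (M : 'M[R]_(m, n)) :
  blockwise rl cl M -> blockwise rl' cl' M ->
  blockwise (fun i => (rl i, rl' i)) (fun j => (cl j, cl' j)) M.
Proof. by move=> hM hM' i j Mij; rewrite (hM _ _ Mij) (hM' _ _ Mij). Qed.

Lemma eq_blockwise T m n (rl rl' : 'I_m -> T) (cl cl' : 'I_n -> T)
    (M : 'M[R]_(m, n)) :
  rl =1 rl' -> cl =1 cl' -> blockwise rl cl M -> blockwise rl' cl' M.
Proof. by move=> e e' hM i j /hM; rewrite e e'. Qed.

Lemma blockwise_inj T U m n (rl : 'I_m -> T) (cl : 'I_n -> T)
    (g : T -> U) (M : 'M[R]_(m, n)) :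
  injective g -> blockwise (g \o rl) (g \o cl) M -> blockwise rl cl M.
Proof. by move=> g_inj hM i j /hM /g_inj. Qed.

End BlockwiseLabels.

Section Blockwise.
Variable R : pzRingType.
Implicit Types T : eqType.

Lemma blockwiseP T m n (rl : 'I_m -> T) (cl : 'I_n -> T) (M : 'M[R]_(m, n)) :
  blockwise rl cl M <-> forall k, fibermx rl k *m M = M *m fibermx cl k.
Proof.
rewrite /fibermx; split=> [hM k | hM i j].
  apply/matrixP => i j; rewrite mul_mx_diag mul_diag_mx !mxE mulr_natl mulr_natr.
  by have [->|/hM ->] := eqVneq (M i j) 0; rewrite ?mul0rn.
apply: contraNeq => ne_ij.
move/matrixP/(_ i j): (hM (cl j)); rewrite mul_mx_diag mul_diag_mx !mxE.
by rewrite eqxx (negbTE ne_ij) mul0r mulr1 => <-.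
Qed.

Lemma blockwise_mul T m n p (a : 'I_m -> T) (b : 'I_n -> T) (c : 'I_p -> T)
    (M : 'M[R]_(m, n)) (N : 'M[R]_(n, p)) :
  blockwise a b M -> blockwise b c N -> blockwise a c (M *m N).
Proof.
move=> /blockwiseP hM /blockwiseP hN; apply/blockwiseP => k.
by rewrite mulmxA hM -mulmxA hN mulmxA.
Qed.

Lemma blockwise1 T n (lab : 'I_n -> T) : blockwise lab lab (1%:M : 'M[R]_n).
Proof. by move=> i j; rewrite mxE; have [->|] := eqVneq i j; rewrite ?eqxx. Qed.

Lemma blockwise_perm_mx T n (rl cl : 'I_n -> T) (s : 'S_n) :
  (forall i, rl i = cl (s i)) -> blockwise rl cl (perm_mx s : 'M[R]_n).
Proof.
by move=> hs i j; rewrite !mxE hs; have [->|] := eqVneq (s i) j; rewrite ?eqxx.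
Qed.

Lemma blockwise_add T m n (rl : 'I_m -> T) (cl : 'I_n -> T) (M N : 'M[R]_(m, n)) :
  blockwise rl cl M -> blockwise rl cl N -> blockwise rl cl (M + N).
Proof.
move=> hM hN i j; rewrite mxE.
by have [->|/hM //] := eqVneq (M i j) 0; rewrite add0r => /hN.
Qed.

Lemma blockwise_opp T m n (rl : 'I_m -> T) (cl : 'I_n -> T) (M : 'M[R]_(m, n)) :
  blockwise rl cl M -> blockwise rl cl (- M).
Proof. by move=> hM i j; rewrite mxE oppr_eq0 => /hM. Qed.

Lemma blockwise_delta_mx T m n (rl : 'I_m -> T) (cl : 'I_n -> T) i0 j0 :
  rl i0 = cl j0 -> blockwise rl cl (delta_mx i0 j0 : 'M[R]_(m, n)).
Proof.
move=> e i j; rewrite mxE.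
by have [->|] := eqVneq i i0; have [->|] := eqVneq j j0; rewrite ?eqxx.
Qed.

End Blockwise.

Lemma blockwise_inv (R : comUnitRingType) (T : eqType) n (a b : 'I_n -> T)
    (M : 'M[R]_n) :
  M \in unitmx -> blockwise a b M -> blockwise b a (invmx M).
Proof.
move=> Mu /blockwiseP hM; apply/blockwiseP => k.
by rewrite -[RHS](mulmxK Mu) -(mulmxA (invmx M)) hM mulmxA mulVmx ?mul1mx.
Qed.

Lemma blockwise_fiber_card (R : numDomainType) (T : eqType) n (a b : 'I_n -> T)
    (M : 'M[R]_n) k :
  M \in unitmx -> blockwise a b M ->
  #|[pred i | a i == k]| = #|[pred j | b j == k]|.
Proof.
move=> Mu /blockwiseP /(_ k) hM.
have tr_fibermx (lab : 'I_n -> T) :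
    \tr (fibermx lab k : 'M[R]_n) = #|[pred i | lab i == k]|%:R.
  rewrite mxtrace_diag -sum1_card natr_sum [RHS]big_mkcond /=.
  by apply: eq_bigr => i _; rewrite mxE inE; case: (_ == _).
apply/eqP; rewrite -(eqr_nat R) -!tr_fibermx.
by rewrite -[fibermx a k](mulmxK Mu) hM mxtrace_mulC mulmxA mulVmx ?mul1mx.
Qed.

Lemma corank1_colinear (F : fieldType) n (M : 'M[F]_n) (y z : 'cV_n) :
  (n - \rank M)%N = 1%N -> M *m y = 0 -> M *m z = 0 -> y != 0 ->
  exists c, z = c *: y.
Proof.
move=> rkM My Mz y_neq0.
have ker (w : 'cV_n) : M *m w = 0 -> (w^T <= kermx M^T)%MS.
  by move=> Mw; apply/sub_kermxP; rewrite -trmx_mul Mw trmx0.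
have ker_y : (kermx M^T <= y^T)%MS.
  have [_ <-] := mxrank_leqif_sup (ker y My).
  by rewrite mxrank_ker mxrank_tr rkM rank_rV trmx_eq0 y_neq0.
have /sub_rVP [c zc] := submx_trans (ker z Mz) ker_y.
by exists c; rewrite -[z]trmxK zc linearZ /= trmxK.
Qed.

Lemma corank1_kernel_label (F : fieldType) (T : eqType) n (lab : 'I_n -> T)
    (M : 'M[F]_n) (y : 'cV_n) a b :
  blockwise lab lab M -> (n - \rank M)%N = 1%N -> M *m y = 0 ->
  y a 0 != 0 -> y b 0 != 0 -> lab a = lab b.
Proof.
move=> /blockwiseP hM rkM My ya yb; apply/eqP; apply: contraTT yb => lab_ab.
have y_neq0 : y != 0 by apply: contraNneq ya => ->; rewrite mxE.
have [c /matrixP Py] : exists c, fibermx lab (lab a) *m y = c *: y.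
  by apply: (corank1_colinear rkM My _ y_neq0); rewrite mulmxA -hM -mulmxA My mulmx0.
have := Py a 0; have := Py b 0; rewrite !mul_diag_mx !mxE eqxx mul1r eq_sym.
rewrite (negbTE lab_ab) mul0r => yb0 ya1.
have c1 : c = 1 by apply: (mulIf ya); rewrite -ya1 mul1r.
by rewrite negbK yb0 c1 mul1r.
Qed.

(** * Adjoints and admissible diagonalizers *)

Section Star.
Variable C : numClosedFieldType.
Implicit Types (st : setting) (T : eqType).

Lemma block_diagE n s (M : 'M[C]_n) :
  block_diag s M <-> blockwise (blk_ord s) (blk_ord s) M.
Proof.
split=> hM i j; apply: contraNeq => /hM; first by move=> ->; rewrite eqxx.
by rewrite /blk_ord => ->; rewrite eqxx.
Qed.

Lemma ctrmxM m n p (A : 'M[C]_(m, n)) (B : 'M[C]_(n, p)) :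
  ctrmx (A *m B) = ctrmx B *m ctrmx A.
Proof. by rewrite /ctrmx map_mxM trmx_mul. Qed.

Lemma mxstarM st n (A B : 'M[C]_n) :
  mxstar st (A *m B) = mxstar st B *m mxstar st A.
Proof. by case: st => /=; rewrite ?trmx_mul ?ctrmxM. Qed.

Lemma mxstar_perm st n (s : 'S_n) : mxstar st (perm_mx s : 'M[C]_n) = perm_mx s^-1.
Proof. by case: st => /=; rewrite ?tr_perm_mx // /ctrmx map_perm_mx tr_perm_mx. Qed.

Lemma ctrmx_unit n (A : 'M[C]_n) : (ctrmx A \in unitmx) = (A \in unitmx).
Proof. by rewrite /ctrmx unitmx_tr !unitmxE det_map_mx !unitfE conjC_eq0. Qed.

Lemma mxstar_unit st n (A : 'M[C]_n) : (mxstar st A \in unitmx) = (A \in unitmx).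
Proof.
by case: st; [exact: unitmx_tr|exact: ctrmx_unit|exact: unitmx_tr|exact: ctrmx_unit].
Qed.

Lemma blockwise_ctrmx T m n (a : 'I_m -> T) (b : 'I_n -> T) (M : 'M[C]_(m, n)) :
  blockwise a b M -> blockwise b a (ctrmx M).
Proof. by move=> hM i j; rewrite !mxE conjC_eq0 => /hM ->. Qed.

Lemma blockwise_mxstar st T n (a b : 'I_n -> T) (M : 'M[C]_n) :
  blockwise a b M -> blockwise b a (mxstar st M).
Proof.
move=> hM; have hMT : blockwise b a M^T by move=> i j; rewrite mxE => /hM ->.
by case: st => //=; apply: blockwise_ctrmx.
Qed.

Lemma W_class_unit st n (W : 'M[C]_n) : W_class st W -> W \in unitmx.
Proof. by case: st => /= [[_ /mulmx1_unit[]] | /mulmx1_unit[] | [] |]. Qed.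

Lemma real_mxM m n p (A : 'M[C]_(m, n)) (B : 'M[C]_(n, p)) :
  real_mx A -> real_mx B -> real_mx (A *m B).
Proof. by move=> hA hB i j; rewrite mxE; apply: rpred_sum => k _; apply: rpredM. Qed.

Lemma real_perm_mx n (s : 'S_n) : real_mx (perm_mx s : 'M[C]_n).
Proof. by move=> i j; rewrite !mxE realn. Qed.

Lemma ctrmx_real m n (A : 'M[C]_(m, n)) : real_mx A -> ctrmx A = A^T.
Proof. by move=> hA; apply/matrixP => i j; rewrite !mxE conj_Creal. Qed.

Lemma W_class_perm st n (W : 'M[C]_n) (s : 'S_n) :
  W_class st W -> W_class st (W *m perm_mx s).
Proof.
have star_perm : mxstar st W *m W = 1%:M ->
    mxstar st (W *m perm_mx s) *m (W *m perm_mx s) = 1%:M.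
  move=> hW; rewrite mxstarM mxstar_perm -!mulmxA (mulmxA (mxstar st W)) hW mul1mx.
  by rewrite -perm_mxM mulVg perm_mx1.
case: st star_perm => /= star_perm.
- by case=> Wr hW; split; [apply: real_mxM (real_perm_mx s) | apply: star_perm].
- exact: star_perm.
- case=> Wr hW; split; first exact: real_mxM (real_perm_mx s).
  by rewrite unitmx_mul hW unitmx_perm.
- by move=> hW; rewrite unitmx_mul hW unitmx_perm.
Qed.

Lemma real_mxB m n (A B : 'M[C]_(m, n)) : real_mx A -> real_mx B -> real_mx (A - B).
Proof. by move=> hA hB i j; rewrite !mxE rpredB. Qed.

Lemma real_ctrmx m n (A : 'M[C]_(m, n)) : real_mx A -> real_mx (ctrmx A).
Proof. by move=> hA i j; rewrite !mxE conj_Creal. Qed.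

Lemma real_col m n (A : 'M[C]_(m, n)) j : real_mx A -> real_mx (col j A).
Proof. by move=> hA a b; rewrite mxE. Qed.

Lemma real_mx1 n : real_mx (1%:M : 'M[C]_n).
Proof. by move=> a b; rewrite mxE realn. Qed.

Lemma cdot_ge0 n (v : 'cV[C]_n) : 0 <= (ctrmx v *m v) 0 0.
Proof. by rewrite mxE; apply: sumr_ge0 => i _; rewrite !mxE mulrC mul_conjC_ge0. Qed.

Lemma cdot_eq0 n (v : 'cV[C]_n) : ((ctrmx v *m v) 0 0 == 0) = (v == 0).
Proof.
have term_ge0 i : 0 <= ctrmx v 0 i * v i 0 by rewrite !mxE mulrC mul_conjC_ge0.
apply/idP/eqP => [/eqP|->]; last by rewrite mulmx0 mxE.
rewrite mxE => /(psumr_eq0P (fun i _ => term_ge0 i)) v0.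
apply/colP => i; apply/eqP; rewrite mxE -mul_conjC_eq0 mulrC.
by have := v0 i isT; rewrite !mxE => ->.
Qed.

Lemma ctrmxZ m n c (A : 'M[C]_(m, n)) : ctrmx (c *: A) = c^* *: ctrmx A.
Proof. by apply/matrixP => i j; rewrite !mxE rmorphM. Qed.

Lemma cdot_conj n (w z : 'cV[C]_n) : ((ctrmx w *m z) 0 0)^* = (ctrmx z *m w) 0 0.
Proof.
rewrite !mxE rmorph_sum; apply: eq_bigr => i _.
by rewrite !mxE rmorphM /= conjCK mulrC.
Qed.

Lemma gram_entry m n p (A : 'M[C]_(m, n)) (B : 'M[C]_(m, p)) a b :
  (ctrmx A *m B) a b = (ctrmx (col a A) *m col b B) 0 0.
Proof. by rewrite !mxE; apply: eq_bigr => i _; rewrite !mxE. Qed.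

End Star.

(** * Eigenvectors against a block diagonalization *)

Section EigenvectorLabels.
Variables (C : numClosedFieldType) (st : setting) (n p q : nat).
Variables (A : 'I_p -> 'M[C]_n) (B : 'I_q -> 'M[C]_n) (lam : 'I_n -> C) (X : 'M[C]_n).
Hypotheses (span_AB : forall M, in_span A M <-> in_span B M)
  (eig : forall j, eigenpair B (lam j) (col j X)) (X_unit : X \in unitmx)
  (geom1 : forall j, geom_mult B (lam j) = 1%N).

Lemma mxstar_span_block_diag s W M :
  jbd_sol st A s W -> in_span A M -> block_diag s (mxstar st W *m M *m W).
Proof.
move=> [_ bdA] [c ->] i j ne_ij.
rewrite mulmx_sumr mulmx_suml summxE big1 // => k _.
by rewrite -scalemxAr -scalemxAl mxE bdA ?mulr0.
Qed.

Lemma jbd_sol_eigvec_block s W j a b :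
  jbd_sol st A s W ->
  (invmx W *m X) a j != 0 -> (invmx W *m X) b j != 0 -> blk s a = blk s b.
Proof.
move=> solW Ya Yb; have W_unit := W_class_unit solW.1.
set M := mxstar st W *m mxpoly_eval B (lam j) *m W.
have bdM : blockwise (blk_ord s) (blk_ord s) M.
  apply/block_diagE.
  by apply: mxstar_span_block_diag solW _; apply/span_AB; exists (fun i => lam j ^+ i).
have rkM : (n - \rank M)%N = 1%N.
  rewrite /M mxrankMfree ?row_free_unit // eqmxMfull ?row_full_unit ?mxstar_unit //.
  by rewrite -(geom1 j) /geom_mult mxrank_coker.
have ker : M *m col j (invmx W *m X) = 0.
  have [_ [_ Px]] := eig j.
  by rewrite /M !colE -!mulmxA (mulKVmx W_unit) -colE Px mulmx0.
by apply: (corank1_kernel_label bdM rkM ker); rewrite mxE.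
Qed.

Lemma jbd_sol_eigvec_labels s W :
  is_partition n s -> jbd_sol st A s W ->
  exists be, blockwise (blk_ord s) be (invmx W *m X) /\ fiber_sizes be s.
Proof.
move=> part_s solW; set Y := invmx W *m X.
pose be j := if [pick i | Y i j != 0] is Some i then blk s i else 0%N.
have Y_be : blockwise (blk_ord s) be Y.
  move=> i j Yij; rewrite /blk_ord /be; case: pickP => [i' Yi'j|/(_ i)].
    exact: jbd_sol_eigvec_block solW Yij Yi'j.
  by rewrite Yij.
exists be; split=> // k; rewrite -(blockwise_fiber_card _ _ Y_be).
  by apply: blk_fiber_sizes; case/andP: part_s => _ /eqP.
by rewrite unitmx_mul unitmx_inv (W_class_unit solW.1) X_unit.
Qed.

End EigenvectorLabels.

(** * Gram-Schmidt within the classes of a labelling *)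

Section GramSchmidt.
Variable C : numClosedFieldType.
Variables (n : nat) (T : eqType) (ka : 'I_n -> T) (N : 'M[C]_n).
Hypotheses (N_unit : N \in unitmx) (N_gram : blockwise ka ka (ctrmx N *m N)).

Definition gs_invariant m (R : 'M[C]_n) := [/\ blockwise ka ka R,
  forall a b, R a b != 0 -> (a <= b)%N,
  forall a b : 'I_n, (m <= b)%N -> R a b = (a == b)%:R,
  forall a b : 'I_n, (a < m)%N -> (b < m)%N ->
    (ctrmx (N *m R) *m (N *m R)) a b = (a == b)%:R
  & real_mx N -> real_mx R].

Section Step.
Variables (m : nat) (R : 'M[C]_n).
Hypotheses (lt_mn : (m < n)%N) (R_ka : blockwise ka ka R)
  (R_upper : forall a b, R a b != 0 -> (a <= b)%N)
  (R_id : forall a b : 'I_n, (m <= b)%N -> R a b = (a == b)%:R)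
  (R_orth : forall a b : 'I_n, (a < m)%N -> (b < m)%N ->
     (ctrmx (N *m R) *m (N *m R)) a b = (a == b)%:R)
  (R_real : real_mx N -> real_mx R).

(* With q_c the columns of Q = N R, column m of N R' is the normalisation of
   v = N e_m - sum_(c < m) <q_c, N e_m> q_c. *)
Let mo := Ordinal lt_mn.
Let Q := N *m R.
Let x := col mo N.
Let cv : 'cV[C]_n := \col_c (if (c < m)%N then (ctrmx Q *m x) c 0 else 0).
Let u := delta_mx mo 0 - R *m cv.
Let v := N *m u.
Let nv := sqrtC ((ctrmx v *m v) 0 0).
Let R' := \matrix_(a, b) if b == mo then u a 0 / nv else R a b.

Let cv_ka : blockwise ka (fun=> ka mo) cv.
Proof.
have : blockwise ka (fun=> ka mo) (ctrmx Q *m x).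
  rewrite /Q /x colE ctrmxM -mulmxA (mulmxA (ctrmx N)).
  apply: blockwise_mul (blockwise_ctrmx R_ka) _.
  by apply: (blockwise_mul N_gram); apply: blockwise_delta_mx.
by move=> hx c j; rewrite mxE; case: ifP => _; [apply: hx | rewrite eqxx].
Qed.

Let cv_lt c : cv c 0 != 0 -> (c < m)%N.
Proof. by rewrite mxE; case: ifP => // _; rewrite eqxx. Qed.

Let u_ka : blockwise ka (fun=> ka mo) u.
Proof.
apply: blockwise_add; first exact: blockwise_delta_mx.
exact/blockwise_opp/(blockwise_mul R_ka cv_ka).
Qed.

Let Rcv_lt a : (R *m cv) a 0 != 0 -> (a < m)%N.
Proof.
rewrite mxE; apply: contraNT; rewrite -leqNgt => le_ma.
apply/eqP/big1 => c _; have [->|/R_upper le_ac] := eqVneq (R a c) 0.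
  by rewrite mul0r.
have [->|/cv_lt] := eqVneq (cv c 0) 0; first by rewrite mulr0.
by rewrite ltnNge (leq_trans le_ma le_ac).
Qed.

Let uE a : u a 0 = (a == mo)%:R - (R *m cv) a 0.
Proof. by rewrite /u; set w := R *m cv; rewrite !mxE andbT. Qed.

Let u_upper a : u a 0 != 0 -> (a <= m)%N.
Proof.
rewrite uE; have [-> //|_] := eqVneq a mo.
by rewrite sub0r oppr_eq0 => /Rcv_lt /ltnW.
Qed.

Let u_mo : u mo 0 = 1.
Proof.
rewrite uE eqxx.
by have [->|/Rcv_lt] := eqVneq ((R *m cv) mo 0) 0; rewrite ?subr0 ?ltnn.
Qed.

Let v_neq0 : v != 0.
Proof.
apply: contra_neq (@oner_neq0 C) => v0; rewrite -u_mo.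
by rewrite -(mulKmx N_unit u) -/v v0 mulmx0 mxE.
Qed.

Let nv_real : nv \is Num.real.
Proof. exact/sqrtC_real/cdot_ge0. Qed.

Let v_orth (a : 'I_n) : (a < m)%N -> (ctrmx Q *m v) a 0 = 0.
Proof.
move=> lt_am; have vE : v = x - Q *m cv by rewrite /v /u mulmxBr mulmxA -colE.
have Qcv : (ctrmx Q *m Q *m cv) a 0 = cv a 0.
  rewrite mxE (bigD1 a) //= R_orth // eqxx mul1r big1 ?addr0 // => c ne_ca.
  have [lt_cm|le_mc] := ltnP c m; first by rewrite R_orth // eq_sym (negbTE ne_ca) mul0r.
  by rewrite [cv c 0]mxE ltnNge le_mc mulr0.
have subE (A B : 'cV[C]_n) : (A - B) a 0 = A a 0 - B a 0 by rewrite !mxE.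
by rewrite vE mulmxBr mulmxA subE Qcv /cv [in X in _ - X]mxE lt_am subrr.
Qed.

Let col_NR' (b : 'I_n) : col b (N *m R') = if b == mo then nv^-1 *: v else col b Q.
Proof.
have colR' : col b R' = if b == mo then nv^-1 *: u else col b R.
  by apply/colP => a; rewrite !mxE; case: (b == mo); rewrite ?mxE // mulrC.
rewrite !colE -mulmxA -colE colR' /Q; case: (b == mo); last by rewrite colE mulmxA.
by rewrite -scalemxAr.
Qed.

Let R'_orth (a b : 'I_n) : (a < m.+1)%N -> (b < m.+1)%N ->
  (ctrmx (N *m R') *m (N *m R')) a b = (a == b)%:R.
Proof.
have below (c : 'I_n) : (c < m.+1)%N -> c != mo -> (c < m)%N.
  by rewrite ltnS leq_eqVlt -val_eqE => /orP[->|].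
have scaleE (c : C) (M : 'M[C]_1) : (c *: M) 0 0 = c * M 0 0 by rewrite mxE.
have gram_col c (w : 'cV_n) : (ctrmx (col c Q) *m w) 0 0 = (ctrmx Q *m w) c 0.
  by rewrite [RHS]gram_entry col_id.
move=> lt_a lt_b; rewrite gram_entry !col_NR'.
have [ea|/(below _ lt_a) lt_am] := eqVneq a mo;
  have [eb|/(below _ lt_b) lt_bm] := eqVneq b mo.
- have nv2 : nv ^+ 2 = (ctrmx v *m v) 0 0 := sqrtCK _.
  rewrite ea eb eqxx ctrmxZ -scalemxAl -scalemxAr !scaleE conj_Creal ?realV //.
  by rewrite mulrA -expr2 exprVn nv2 mulVf ?cdot_eq0.
- rewrite ea ctrmxZ -scalemxAl scaleE -cdot_conj gram_col v_orth // conjC0 mulr0.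
  by rewrite -val_eqE /= eqn_leq leqNgt lt_bm.
- rewrite eb -scalemxAr scaleE gram_col v_orth // mulr0.
  by rewrite -val_eqE /= eqn_leq [(m <= a)%N]leqNgt lt_am andbF.
- by rewrite -gram_entry R_orth.
Qed.

Lemma gs_invariant_step : exists R'', gs_invariant m.+1 R''.
Proof.
exists R'; split.
- move=> a b; rewrite mxE; have [->|_] := eqVneq b mo; last exact: R_ka.
  by rewrite mulf_eq0 negb_or => /andP[/u_ka].
- move=> a b; rewrite mxE; have [->|_] := eqVneq b mo; last exact: R_upper.
  by rewrite mulf_eq0 negb_or => /andP[/u_upper].
- move=> a b lt_mb; rewrite mxE; have [eb|_] := eqVneq b mo; last exact/R_id/ltnW.
  by move: lt_mb; rewrite eb ltnn.
- exact: R'_orth.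
- move=> N_real a b; rewrite mxE; case: (b == mo); last exact: R_real.
  have Q_real : real_mx Q by apply: real_mxM (R_real N_real).
  have cv_real : real_mx cv.
    move=> c d; rewrite mxE; case: ifP => _; last exact: real0.
    exact/real_mxM/real_col/N_real/real_ctrmx.
  have u_real : real_mx u.
    apply: real_mxB; first by move=> c d; rewrite mxE realn.
    exact: real_mxM (R_real N_real) cv_real.
  by rewrite rpredM // realV.
Qed.

End Step.

Lemma gram_schmidt : exists R, [/\ blockwise ka ka R,
  ctrmx (N *m R) *m (N *m R) = 1%:M & real_mx N -> real_mx R].
Proof.
suff /(_ n (leqnn n)) [R [R_ka _ _ R_orth R_real]] :
    forall m, (m <= n)%N -> exists R, gs_invariant m R.
  by exists R; split => //; apply/matrixP => a b; rewrite R_orth // mxE.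
elim=> [_|m IH lt_mn].
  exists 1%:M; split=> //; first exact: blockwise1.
  - by move=> a b; rewrite mxE; have [->|] := eqVneq a b; rewrite ?eqxx.
  - by move=> a b _; rewrite mxE.
  - by move=> _; apply: real_mx1.
have [R [R_ka R_upper R_id R_orth R_real]] := IH (ltnW lt_mn).
exact: (gs_invariant_step lt_mn R_ka R_upper R_id R_orth R_real).
Qed.

End GramSchmidt.

(** * A common refinement of two solutions *)

Section RealDiagonalizers.
Variable C : numClosedFieldType.

Lemma real_det n (W : 'M[C]_n) : real_mx W -> \det W \is Num.real.
Proof.
move=> W_real; apply: rpred_sum => s _; apply: rpredM.
  by apply: rpredX; rewrite rpredN real1.
by apply: rpred_prod => i _; apply: W_real.
Qed.

Lemma real_invmx n (W : 'M[C]_n) : real_mx W -> real_mx (invmx W).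
Proof.
move=> W_real i j; rewrite /invmx; case: ifP => _; last exact: W_real.
rewrite !mxE rpredM ?realV ?real_det // /cofactor rpredM //.
  by apply: rpredX; rewrite rpredN real1.
by apply: real_det => a b; rewrite !mxE; apply: W_real.
Qed.

(* Writing X = P + i Q with P, Q real, det (P + t Q) is a polynomial in t that
   does not vanish at t = i, hence not at some real t; P + t Q keeps the zeros
   of F X for every real F. *)
Lemma real_unitmx_zeros n (X : 'M[C]_n) : X \in unitmx ->
  exists Xr : 'M[C]_n, [/\ real_mx Xr, Xr \in unitmx &
    forall F : 'M[C]_n, real_mx F -> forall i j, (F *m X) i j = 0 -> (F *m Xr) i j = 0].
Proof.
move=> X_unit.
pose P := map_mx (fun z : C => 'Re z) X; pose Q := map_mx (fun z : C => 'Im z) X.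
pose d := \det (map_mx polyC P + 'X *: map_mx polyC Q).
have unit_PQ t : (P + t *: Q \in unitmx) = (d.[t] != 0).
  rewrite /d -horner_evalE -det_map_mx map_mxD map_mxZ /= horner_evalE hornerX.
  have ev (M : 'M[C]_n) : map_mx (horner_eval t) (map_mx polyC M) = M.
    by rewrite -map_mx_comp map_mx_id // => z /=; rewrite horner_evalE hornerC.
  by rewrite !ev unitmxE unitfE.
have X_PQ : X = P + 'i *: Q by apply/matrixP => i j; rewrite !mxE -Crect.
have d_neq0 : d != 0.
  by move: X_unit; rewrite X_PQ unit_PQ; apply: contra_neq => ->; rewrite hornerE.
have [t t_real d_t] : exists2 t, t \is Num.real & ~~ root d t.
  have nat_uniq : uniq [seq (i%:R : C) | i <- iota 0 (size d)].
    by rewrite map_inj_uniq ?iota_uniq //; apply: mulrIn; rewrite oner_eq0.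
  have := contraNN (fun all_roots => max_poly_roots d_neq0 all_roots nat_uniq).
  rewrite size_map size_iota ltnn => /(_ isT) /allPn[t /mapP[k _ ->] d_k].
  by exists k%:R; rewrite ?realn.
exists (P + t *: Q); split.
- by move=> i j; rewrite !mxE rpredD ?rpredM ?Creal_Re ?Creal_Im.
- by rewrite unit_PQ.
- move=> F F_real i j FX0.
  have -> : (F *m (P + t *: Q)) i j = 'Re ((F *m X) i j) + t * 'Im ((F *m X) i j).
    rewrite !mxE !raddf_sum mulr_sumr -big_split /=; apply: eq_bigr => k _.
    by rewrite !mxE ReMl ?ImMl // mulrDr mulrCA.
  by rewrite FX0 !raddf0 mulr0 addr0.
Qed.

End RealDiagonalizers.

Section CommonRefinement.
Variables (C : numClosedFieldType) (st : setting) (n p : nat) (A : 'I_p -> 'M[C]_n).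

Lemma blockwise_congr s be (W N F : 'M[C]_n) :
  W \in unitmx -> blockwise (blk_ord s) be (invmx W *m N) ->
  block_diag s (mxstar st W *m F *m W) -> blockwise be be (mxstar st N *m F *m N).
Proof.
move=> W_unit WN /block_diagE bdF.
have -> : mxstar st N *m F *m N =
    mxstar st (invmx W *m N) *m (mxstar st W *m F *m W) *m (invmx W *m N).
  have eN : N = W *m (invmx W *m N) by rewrite mulKVmx.
  by rewrite [in LHS]eN mxstarM !mulmxA.
exact: blockwise_mul (blockwise_mul (blockwise_mxstar (st := st) WN) bdF) WN.
Qed.

Variables (s1 s2 : seq nat) (W1 W2 : 'M[C]_n) (be1 be2 : 'I_n -> nat).
Hypotheses (sol1 : jbd_sol st A s1 W1) (sol2 : jbd_sol st A s2 W2).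

Let ka j := (be1 j, be2 j).

Definition adapted N := blockwise (blk_ord s1) be1 (invmx W1 *m N) /\
  blockwise (blk_ord s2) be2 (invmx W2 *m N).

Lemma adapted_congr N F :
  adapted N -> block_diag s1 (mxstar st W1 *m F *m W1) ->
  block_diag s2 (mxstar st W2 *m F *m W2) -> blockwise ka ka (mxstar st N *m F *m N).
Proof.
move=> [N1 N2] bd1 bd2; apply: blockwise_pair.
  exact: blockwise_congr (W_class_unit sol1.1) N1 bd1.
exact: blockwise_congr (W_class_unit sol2.1) N2 bd2.
Qed.

Lemma adapted_real N : real_mx W1 -> real_mx W2 -> N \in unitmx -> adapted N ->
  exists Nr, [/\ real_mx Nr, Nr \in unitmx & adapted Nr].
Proof.
move=> W1_real W2_real N_unit [N1 N2].
have [Nr [Nr_real Nr_unit Nr_zeros]] := real_unitmx_zeros N_unit.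
have keep s be W : real_mx W -> blockwise (blk_ord s) be (invmx W *m N) ->
    blockwise (blk_ord s) be (invmx W *m Nr).
  move=> W_real WN i j nz; apply: WN.
  exact: contra_neq (Nr_zeros _ (real_invmx W_real) i j) nz.
by exists Nr; split=> //; split; apply: keep.
Qed.

Lemma adapted_orthonormal N :
  mxstar st W1 *m W1 = 1%:M -> mxstar st W2 *m W2 = 1%:M ->
  N \in unitmx -> mxstar st N = ctrmx N -> adapted N ->
  exists R, [/\ ctrmx (N *m R) *m (N *m R) = 1%:M, real_mx N -> real_mx R &
    forall i, blockwise ka ka (mxstar st (N *m R) *m A i *m (N *m R))].
Proof.
move=> W1_orth W2_orth N_unit N_star adN.
have bd1 s (W : 'M[C]_n) :
    mxstar st W *m W = 1%:M -> block_diag s (mxstar st W *m 1%:M *m W).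
  by move=> W_orth; rewrite mulmx1 W_orth; apply/block_diagE/blockwise1.
have gram : blockwise ka ka (ctrmx N *m N).
  rewrite -N_star -[mxstar st N]mulmx1.
  exact: adapted_congr adN (bd1 _ _ W1_orth) (bd1 _ _ W2_orth).
have [R [R_ka R_orth R_real]] := gram_schmidt N_unit gram.
exists R; split=> // i.
have -> : mxstar st (N *m R) *m A i *m (N *m R) =
    mxstar st R *m (mxstar st N *m A i *m N) *m R by rewrite mxstarM !mulmxA.
apply: blockwise_mul (blockwise_mul (blockwise_mxstar R_ka) _) R_ka.
exact: adapted_congr adN (sol1.2 i) (sol2.2 i).
Qed.

Lemma refined_diagonalizer X : X \in unitmx -> adapted X ->
  exists M, W_class st M /\ forall i, blockwise ka ka (mxstar st M *m A i *m M).
Proof.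
move=> X_unit adX.
have conjA N : adapted N -> forall i, blockwise ka ka (mxstar st N *m A i *m N).
  by move=> adN i; apply: adapted_congr adN (sol1.2 i) (sol2.2 i).
have W1c := sol1.1; have W2c := sol2.1.
case Est: st W1c W2c => /= W1c W2c.
- have [Xr [Xr_real Xr_unit adXr]] := adapted_real W1c.1 W2c.1 X_unit adX.
  have [|||||R [R_orth R_real R_ka]] := @adapted_orthonormal Xr;
    rewrite ?Est /= ?ctrmx_real ?W1c.2 ?W2c.2 //.
  have XrR_real := real_mxM Xr_real (R_real Xr_real).
  rewrite Est in R_ka.
  by exists (Xr *m R); split=> //; split; rewrite // -ctrmx_real.
- have [|||||R [R_orth R_real R_ka]] := @adapted_orthonormal X; rewrite ?Est //.
  by rewrite Est in R_ka; exists (X *m R).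
- have [Xr [Xr_real Xr_unit adXr]] := adapted_real W1c.1 W2c.1 X_unit adX.
  have XrA := conjA Xr adXr; rewrite Est in XrA.
  by exists Xr.
- have XA := conjA X adX; rewrite Est in XA.
  by exists X.
Qed.

End CommonRefinement.

Lemma jbd_sol_of_labels (C : numClosedFieldType) st n p (A : 'I_p -> 'M[C]_n)
    (T : eqType) (lab : 'I_n -> T) (M : 'M[C]_n) :
  W_class st M -> (forall i, blockwise lab lab (mxstar st M *m A i *m M)) ->
  exists s W, [/\ is_partition n s, jbd_sol st A s W &
                  size s = size (undup [seq lab j | j <- enum 'I_n])].
Proof.
move=> M_class MA; set L := undup _.
pose f j := index (lab j) L.
have labL j : lab j \in L by rewrite mem_undup map_f ?mem_enum.
have f_lt j : (f j < size L)%N by rewrite index_mem.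
have f_onto k : (k < size L)%N -> exists j, f j = k.
  move=> lt_k; have [x0 _] : exists x0 : T, true by case: (L) lt_k => // x0; exists x0.
  have : nth x0 L k \in [seq lab j | j <- enum 'I_n].
    by rewrite -mem_undup; apply: mem_nth.
  case/mapP=> j _ lab_j.
  by exists j; rewrite /f -lab_j index_uniq ?undup_uniq.
have [s [part_s size_s [sg blk_s]]] := partition_of_labels f_lt f_onto.
exists s, (M *m perm_mx sg^-1); split=> //; split; first exact: W_class_perm.
move=> i; apply/block_diagE.
have -> : mxstar st (M *m perm_mx sg^-1) *m A i *m (M *m perm_mx sg^-1) =
    perm_mx sg *m (mxstar st M *m A i *m M) *m perm_mx sg^-1.
  by rewrite mxstarM mxstar_perm invgK !mulmxA.
have P1 : blockwise (blk_ord s) f (perm_mx sg : 'M[C]_n) by apply: blockwise_perm_mx.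
have P2 : blockwise f f (mxstar st M *m A i *m M) := blockwise_map (index^~ L) (MA i).
have P3 : blockwise f (blk_ord s) (perm_mx sg^-1 : 'M[C]_n).
  by apply: blockwise_perm_mx => j; rewrite blk_s permKV.
exact: blockwise_mul (blockwise_mul P1 P2) P3.
Qed.

Lemma gjbd_labels_coincide (C : numClosedFieldType) st n p (A : 'I_p -> 'M[C]_n)
    (X : 'M[C]_n) s1 W1 s2 W2 (be1 be2 : 'I_n -> nat) :
  X \in unitmx -> gjbd_sol st A s1 W1 -> gjbd_sol st A s2 W2 ->
  blockwise (blk_ord s1) be1 (invmx W1 *m X) ->
  blockwise (blk_ord s2) be2 (invmx W2 *m X) ->
  fiber_sizes be1 s1 -> fiber_sizes be2 s2 ->
  forall j j', (be1 j == be1 j') = (be2 j == be2 j').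
Proof.
move=> X_unit [part1 [sol1 max1]] [part2 [sol2 max2]] X1 X2 fs1 fs2.
have [M [M_class MA]] := refined_diagonalizer sol1 sol2 X_unit (conj X1 X2).
have [s [W [part_s sol_s size_s]]] := jbd_sol_of_labels M_class MA.
set L := [seq (be1 j, be2 j) | j <- enum 'I_n] in size_s.
have inj_proj (g : nat * nat -> nat) s' be : is_partition n s' -> fiber_sizes be s' ->
    (forall j, g (be1 j, be2 j) = be j) -> (size s <= size s')%N -> {in L &, injective g}.
  move=> part' fs' gE le_s; apply: size_undup_map_inj; apply/eqP.
  rewrite eqn_leq size_undup_map -size_s /= -map_comp (eq_map gE).
  by rewrite (size_undup_labels part' fs').
have solvable_s : exists W', jbd_sol st A s W' by exists W.
have inj1 := inj_proj fst _ _ part1 fs1 (fun=> erefl) (max1 _ part_s solvable_s).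
have inj2 := inj_proj snd _ _ part2 fs2 (fun=> erefl) (max2 _ part_s solvable_s).
move=> j j'; have inL i : (be1 i, be2 i) \in L by rewrite map_f ?mem_enum.
by apply/eqP/eqP => [/(inj1 _ _ (inL j) (inL j'))|/(inj2 _ _ (inL j) (inL j'))] [].
Qed.

(** * Matching the blocks of two solutions *)

Definition natperm t (sg : 'S_t) (k : nat) : nat :=
  if insub k is Some k' then val (sg k') else k.

Lemma natperm_ord t (sg : 'S_t) (k : 'I_t) : natperm sg (val k) = val (sg k).
Proof. by rewrite /natperm valK. Qed.

Lemma natperm_inj t (sg : 'S_t) : injective (natperm sg).
Proof.
move=> k k'; rewrite /natperm.
case: insubP => [i _ <-|/negbTE lt_k]; case: insubP => [i' _ <-|/negbTE lt_k'] //.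
- by move/val_inj/perm_inj ->.
- by move=> e; move: lt_k'; rewrite -e ltn_ord.
- by move=> e; move: lt_k; rewrite e ltn_ord.
Qed.

Lemma block_perm_of_labels n s1 s2 (be1 be2 : 'I_n -> nat) :
  is_partition n s1 -> fiber_sizes be1 s1 -> fiber_sizes be2 s2 -> size s2 = size s1 ->
  (forall j j', (be1 j == be1 j') = (be2 j == be2 j')) ->
  exists sg : 'S_(size s1), forall j, be2 j = natperm sg (be1 j).
Proof.
move=> part1 fs1 fs2 size12 same; set t := size s1.
pose sgf k := if [pick j | be1 j == k] is Some j then be2 j else k.
have sgfE j : be2 j = sgf (be1 j).
  rewrite /sgf; case: pickP => [j' /eqP e|/(_ j)]; last by rewrite eqxx.
  by apply/eqP; rewrite -same e.
have sgf_lt (k : 'I_t) : (sgf k < t)%N.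
  have [j <-] := fiber_sizes_surj part1 fs1 (ltn_ord k).
  by rewrite -sgfE /t -size12 (fiber_sizes_lt _ fs2).
have sgo_inj : injective (fun k : 'I_t => Ordinal (sgf_lt k)).
  move=> k k' /(congr1 val) /= e; apply: ord_inj.
  have [j ej] := fiber_sizes_surj part1 fs1 (ltn_ord k).
  have [j' ej'] := fiber_sizes_surj part1 fs1 (ltn_ord k').
  rewrite -ej -ej' -!sgfE in e *; apply/eqP; by rewrite same e.
exists (perm sgo_inj) => j; have lt_j : (be1 j < t)%N := fiber_sizes_lt _ fs1.
by rewrite -[be1 j]/(val (Ordinal lt_j)) natperm_ord permE /= sgfE.
Qed.

Lemma perm_part_of_labels n s1 s2 (be1 be2 : 'I_n -> nat) (sg : 'S_(size s1)) :
  fiber_sizes be1 s1 -> fiber_sizes be2 s2 -> size s2 = size s1 ->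
  (forall j, be2 j = natperm sg (be1 j)) -> s2 = perm_part sg.
Proof.
move=> fs1 fs2 size12 be2E.
apply: (@eq_from_nth _ 0%N); first by rewrite size_map size_enum_ord.
move=> v; rewrite size12 => lt_v; set k := Ordinal lt_v.
rewrite (nth_map k) ?size_enum_ord // (_ : nth k _ v = k); last first.
  by apply: val_inj; rewrite /= nth_enum_ord.
rewrite -fs1 -[v]/(val k) -fs2; apply: eq_card => j; rewrite !inE be2E.
have nk : natperm sg (val (sg^-1 k)%g) = val k by rewrite natperm_ord permKV.
by rewrite -nk (inj_eq (@natperm_inj _ sg)).
Qed.

Lemma equiv_sol_of_labels (C : numClosedFieldType) n s1 s2 (W1 W2 X : 'M[C]_n)
    (be1 be2 : 'I_n -> nat) (sg : 'S_(size s1)) :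
  W1 \in unitmx -> W2 \in unitmx -> X \in unitmx ->
  blockwise (blk_ord s1) be1 (invmx W1 *m X) ->
  blockwise (blk_ord s2) be2 (invmx W2 *m X) ->
  sumn s1 = n -> sumn s2 = n -> fiber_sizes be1 s1 -> fiber_sizes be2 s2 ->
  (forall j, be2 j = natperm sg (be1 j)) -> s2 = perm_part sg ->
  equiv_sol s1 W1 s2 W2.
Proof.
move=> W1_unit W2_unit X_unit X1 X2 sum1 sum2 fs1 fs2 be2E s2E.
have [r1 r1E] : exists r1 : 'S_n, forall i, blk_ord s1 i = be1 (r1 i).
  by apply: perm_of_fiber_cards => k; rewrite fs1 blk_fiber_sizes.
have [r2 r2E] : exists r2 : 'S_n, forall i, blk_ord s2 i = be2 (r2 i).
  by apply: perm_of_fiber_cards => k; rewrite fs2 blk_fiber_sizes.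
pose pi := (r1 * r2^-1)%g.
have piE r : blk s2 (pi r) = natperm sg (blk s1 r).
  by rewrite permM -[blk s2 _]/(blk_ord s2 _) r2E permKV be2E -r1E.
exists sg, (invmx W1 *m W2 *m perm_mx pi^-1), pi; split.
- by rewrite !unitmx_mul unitmx_inv W1_unit W2_unit unitmx_perm.
- apply/block_diagE/(blockwise_inj (@natperm_inj _ sg)).
  have Y2_unit : invmx W2 *m X \in unitmx by rewrite unitmx_mul unitmx_inv W2_unit.
  have -> : invmx W1 *m W2 = (invmx W1 *m X) *m invmx (invmx W2 *m X).
    by rewrite -mulmxA; congr (_ *m _); rewrite -{1}(mulKVmx W2_unit X) mulmxK.
  have Y1 : blockwise (natperm sg \o blk_ord s1) be2 (invmx W1 *m X).
    exact: eq_blockwise (fun j => esym (be2E j)) (blockwise_map _ X1).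
  have P : blockwise (blk_ord s2) (natperm sg \o blk_ord s1) (perm_mx pi^-1 : 'M[C]_n).
    by apply: blockwise_perm_mx => i; rewrite /= -piE permKV.
  exact: blockwise_mul (blockwise_mul Y1 (blockwise_inv Y2_unit X2)) P.
- by move=> r k e; rewrite -s2E piE e natperm_ord.
- exact: s2E.
- by rewrite !mulmxA mulmxV // mul1mx -mulmxA -perm_mxM mulVg perm_mx1 mulmx1.
Qed.

Theorem theorem3p2 (C : numClosedFieldType) (st : setting) (n p q : nat)
  (A : 'I_p.+1 -> 'M[C]_n) (B : 'I_q.+1 -> 'M[C]_n)
  (lam : 'I_n -> C) (X : 'M[C]_n) :
  (forall i, mat_class st (A i)) ->
  (forall M, in_span A M <-> in_span B M) ->
  (forall j, eigenpair B (lam j) (col j X)) ->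
  X \in unitmx ->
  (forall j, geom_mult B (lam j) = 1%N) ->
  forall (s1 : seq nat) (W1 : 'M[C]_n) (s2 : seq nat) (W2 : 'M[C]_n),
    gjbd_sol st A s1 W1 -> gjbd_sol st A s2 W2 ->
    equiv_sol s1 W1 s2 W2.
Proof.
move=> _ span_AB eig X_unit geom1 s1 W1 s2 W2 gjbd1 gjbd2.
have [part1 [sol1 max1]] := gjbd1; have [part2 [sol2 max2]] := gjbd2.
have [be1 [X1 fs1]] := jbd_sol_eigvec_labels span_AB eig X_unit geom1 part1 sol1.
have [be2 [X2 fs2]] := jbd_sol_eigvec_labels span_AB eig X_unit geom1 part2 sol2.
have size12 : size s2 = size s1.
  by apply/eqP; rewrite eqn_leq max1 ?max2 //; [exists W1 | exists W2].
have same := gjbd_labels_coincide X_unit gjbd1 gjbd2 X1 X2 fs1 fs2.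
have [sg be2E] := block_perm_of_labels part1 fs1 fs2 size12 same.
have sum_s (s : seq nat) : is_partition n s -> sumn s = n by case/andP=> _ /eqP.
exact: equiv_sol_of_labels (W_class_unit sol1.1) (W_class_unit sol2.1) X_unit X1 X2
  (sum_s _ part1) (sum_s _ part2) fs1 fs2 be2E (perm_part_of_labels fs1 fs2 size12 be2E).
Qed.
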